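(* Let $\lambda$ be the security parameter, $q$ a modulus, $m,n\in\mathbb{N}$, and let $\mathsf{NMIFE}^{\mathrm{ot}}$ be the scheme for multi-input inner products over $\mathbb{Z}_q$ described in the context. Then $\mathsf{NMIFE}^{\mathrm{ot}}$ is $\mathsf{IND}$-secure; more precisely, for any $\mathsf{PPT}$ adversary $\mathcal{A}$, $$\mathsf{Adv}^{\mathsf{IND}}_{\mathsf{NMIFE}^{\mathrm{ot}},\mathcal{A}}(\lambda)=0 .$$
   Context: Notation: $[n]=\{1,\dots,n\}$. For vectors $\mathbf{y}=(\mathbf{y}_1,\dots,\mathbf{y}_n)\in(\mathbb{Z}_q^m)^n$ let $f_{\mathbf{y}}(\mathbf{x}_1,\dots,\mathbf{x}_n)=\sum_{i\in[n]}\langle \mathbf{x}_i,\mathbf{y}_i\rangle \bmod q$. For $\Delta\in\mathbb{Z}_q$, $\mathcal{D}_\Delta$ denotes the distribution outputting $\Delta$ with probability one. The scheme $\mathsf{NMIFE}^{\mathrm{ot}}$: - $\mathsf{Setup}(1^\lambda,m,n)$: for each $i\in[n]$ sample $\mathsf{ek}_i\leftarrow\mathbb{Z}_q^m$ uniformly; output $\mathsf{msk}=\{(i,\mathsf{ek}_i)\}_{i\in[n]}$. - $\mathsf{Enc}(\mathsf{ek}_i,\mathbf{x}_i)$ for $\mathbf{x}_i\in\mathbb{Z}_q^m$: output $\mathsf{ct}_i=(i,\mathbf{c}_i:=\mathbf{x}_i+\mathsf{ek}_i \bmod q)$. - $\mathsf{KeyGen}(\mathsf{msk},f_{\mathbf{y}},\mathcal{D})$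 for a distribution $\mathcal{D}$ over $\mathbb{Z}_q$: sample $\Delta\leftarrow\mathcal{D}$ and output $\mathsf{dk}_{\mathbf{y}}=(\mathbf{y},z:=\sum_{i\in[n]}\langle \mathsf{ek}_i,\mathbf{y}_i\rangle-\Delta \bmod q)$. - $\mathsf{Dec}(\mathsf{dk}_{\mathbf{y}},\mathsf{ct}_1,\dots,\mathsf{ct}_n)$: output $\sum_{i\in[n]}\langle\mathbf{c}_i,\mathbf{y}_i\rangle-z\bmod q$. Security game $\mathsf{IND}_\beta$ ($\beta\in\{0,1\}$) between adversary $\mathcal{A}$ and challenger: the challenger runs $\mathsf{Setup}(1^\lambda,m,n)$ and chooses the bit $\beta$. $\mathcal{A}$ may adaptively make encryption queries $\mathsf{QEnc}(i,\mathbf{x}_i^0,\mathbf{x}_i^1)$, answered by $\mathsf{Enc}(\mathsf{ek}_i,\mathbf{x}_i^\beta)$, where only one query per slot $i$ is answered (later ones for the same $i$ are ignored), and decryption-key queries $\mathsf{QKeyGen}(f_{\mathbf{y}},\Delta^0,\Delta^1)$ with $\Delta^0,\Delta^1\in\mathbb{Z}_q$, answered by $\mathsf{KeyGen}(\mathsf{msk},f_{\mathbf{y}},\mathcal{D}_{\Delta^\beta})$. Finally $\mathcal{A}$ outputs $\beta'$; if $\mathcal{A}$ was not admissible, $\beta'$ is set to $0$; the game outputs $\beta'$. $\mathcal{A}$ is admissible if (a) whenever some decryption-key query was made, every slot $i\in[n]$ has been queried to $\mathsf{QEnc}$, and (b) for every key query $\mathsf{QKeyGen}(f_{\mathbf{y}},\Delta^0,\Delta^1)$,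 $f_{\mathbf{y}}(\mathbf{x}_1^0,\dots,\mathbf{x}_n^0)+\Delta^0=f_{\mathbf{y}}(\mathbf{x}_1^1,\dots,\mathbf{x}_n^1)+\Delta^1$, where $\mathbf{x}_i^b$ are the answered encryption queries. The advantage is $\mathsf{Adv}^{\mathsf{IND}}_{\mathsf{NMIFE}^{\mathrm{ot}},\mathcal{A}}(\lambda)=|\Pr[\mathsf{IND}_0(\lambda,\mathcal{A})=1]-\Pr[\mathsf{IND}_1(\lambda,\mathcal{A})=1]|$; the scheme is $\mathsf{IND}$-secure if this is negligible for all $\mathsf{PPT}$ $\mathcal{A}$. *)

From HB Require Import structures.
From mathcomp Require Import all_boot all_order all_algebra.
Set Implicit Arguments. Unset Strict Implicit. Unset Printing Implicit Defensive.
Import Order.TTheory GRing.Theory Num.Theory.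
Local Open Scope ring_scope.

Notation vec q m := 'rV['Z_q]_m.
Notation vecs q m n := {ffun 'I_n -> vec q m}.

Section Scheme.
Variables q m n : nat.

Definition ip (x y : vec q m) : 'Z_q := \sum_(j < m) x ord0 j * y ord0 j.

Definition f_y (y xs : vecs q m n) : 'Z_q := \sum_(i < n) ip (xs i) (y i).

(* msk = {(i, ek_i)}_i, represented as the finite function i |-> ek_i;
   Setup samples it uniformly from (Z_q^m)^n (see Pr below). *)
Definition msk_t := vecs q m n.

Definition Enc (i : 'I_n) (eki : vec q m) (x : vec q m) : 'I_n * vec q m :=
  (i, x + eki).

(* KeyGen(msk, f_y, D) with Delta the value sampled from D
   (in the game D = D_Delta is a point mass, so Delta is deterministic). *)
Definition KeyGen (msk : msk_t) (y : vecs q m n) (Delta : 'Z_q)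
  : vecs q m n * 'Z_q :=
  (y, \sum_(i < n) ip (msk i) (y i) - Delta).

Definition Dec (dk : vecs q m n * 'Z_q) (cts : vecs q m n) : 'Z_q :=
  \sum_(i < n) ip (cts i) (dk.1 i) - dk.2.

End Scheme.

(* An (adaptive) adversary, for fixed random coins: an interaction tree.
   - ADone b           : output b
   - AEnc i x0 x1 k    : query QEnc(i, x0, x1), continue with the answer
                         (Some ct, or None if the query is ignored)
   - AKey y d0 d1 k    : query QKeyGen(f_y, d0, d1), continue with dk_y *)
Inductive adversary (q m n : nat) : Type :=
| ADone of bool
| AEnc of 'I_n & vec q m & vec q m & (option ('I_n * vec q m) -> adversary q m n)
| AKey of vecs q m n & 'Z_q & 'Z_q & (vecs q m n * 'Z_q -> adversary q m n).
Arguments ADone {q m n}.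
Arguments AEnc {q m n}.
Arguments AKey {q m n}.

Section Game.
Variables q m n : nat.

Definition enc_log := {ffun 'I_n -> option (vec q m * vec q m)}.
Definition key_log := seq (vecs q m n * 'Z_q * 'Z_q).

Fixpoint run (beta : bool) (msk : msk_t q m n) (A : adversary q m n)
  (E : enc_log) (K : key_log) : bool * enc_log * key_log :=
  match A with
  | ADone b => (b, E, K)
  | AEnc i x0 x1 k =>
      if E i is Some _ then run beta msk (k None) E K
      else run beta msk (k (Some (Enc i (msk i) (if beta then x1 else x0))))
             [ffun j => if j == i then Some (x0, x1) else E j] K
  | AKey y d0 d1 k =>
      run beta msk (k (KeyGen msk y (if beta then d1 else d0))) E
          (rcons K (y, d0, d1))
  end.

Definition chal (b : bool) (E : enc_log) : vecs q m n :=
  [ffun i => if E i is Some p then (if b then p.2 else p.1) else 0].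

Definition admissible (E : enc_log) (K : key_log) : bool :=
  (K == [::]) ||
  ([forall i, E i != None] &&
   all (fun t => f_y t.1.1 (chal false E) + t.1.2 == f_y t.1.1 (chal true E) + t.2) K).

(* IND_beta with challenger randomness msk and adversary coins fixed *)
Definition IND (beta : bool) (A : adversary q m n) (msk : msk_t q m n) : bool :=
  let: (b', E, K) := run beta msk A [ffun => None] [::] in
  b' && admissible E K.

(* Pr[IND_beta(A) = 1]: adversary coins r uniform in the finite type R,
   msk uniform in (Z_q^m)^n (Setup). *)
Definition Pr_IND (beta : bool) (R : finType) (A : R -> adversary q m n) : rat :=
  #|[set p : R * msk_t q m n | IND beta (A p.1) p.2]|%:R
  / #|[set: R * msk_t q m n]|%:R.

Definition Adv_IND (R : finType) (A : R -> adversary q m n) : rat :=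
  `|Pr_IND false A - Pr_IND true A|.

End Game.

From HB Require Import structures.
From mathcomp Require Import all_boot all_order all_algebra.
Set Implicit Arguments. Unset Strict Implicit. Unset Printing Implicit Defensive.
Import Order.TTheory GRing.Theory Num.Theory.
Local Open Scope ring_scope.

(* One-time-pad argument.  Fix the adversary's coins and a winning run of
   IND_beta, with answered challenges x^0, x^1.  Replacing each ek_i by
   ek_i + x_i^beta - x_i^(~beta) makes IND_(~beta) answer every query exactly
   as IND_beta did: the ciphertexts are unchanged slot by slot, and the
   decryption keys are unchanged precisely because of admissibility (b).  The
   final transcript, hence the shift, can be read off the image, so this map
   is injective on winning pairs (coins, msk); by symmetry both games have
   equally many winning pairs. *)

Section OneTimePad.
Variables q m n : nat.

Lemma ipDl (a b y : vec q m) : ip (a + b) y = ip a y + ip b y.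
Proof. by rewrite /ip -big_split; apply: eq_bigr => j _; rewrite mxE mulrDl. Qed.

Lemma ipBl (a b y : vec q m) : ip (a - b) y = ip a y - ip b y.
Proof. by rewrite /ip -sumrB; apply: eq_bigr => j _; rewrite !mxE mulrBl. Qed.

Lemma chal_Some b (E : enc_log q m n) i x0 x1 :
  E i = Some (x0, x1) -> chal b E i = if b then x1 else x0.
Proof. by rewrite /chal ffunE => ->. Qed.

Definition shift_msk (beta : bool) (E : enc_log q m n) (msk : msk_t q m n)
  : msk_t q m n :=
  [ffun i => msk i + (chal beta E i - chal (~~ beta) E i)].

Lemma shift_msk_inj beta E : injective (shift_msk beta E).
Proof.
move=> msk1 msk2 /ffunP eq_shift; apply/ffunP => i.
by move: (eq_shift i); rewrite !ffunE; apply: addIr.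
Qed.

Lemma sum_ip_shift_msk beta E msk (y : vecs q m n) :
  \sum_(i < n) ip (shift_msk beta E msk i) (y i) =
  \sum_(i < n) ip (msk i) (y i) + f_y y (chal beta E) - f_y y (chal (~~ beta) E).
Proof.
rewrite /f_y -big_split -sumrB; apply: eq_bigr => i _.
by rewrite ffunE ipDl ipBl addrA.
Qed.

Lemma Enc_shift_msk beta (E : enc_log q m n) msk i (x0 x1 : vec q m) :
  E i = Some (x0, x1) ->
  Enc i (shift_msk beta E msk i) (if ~~ beta then x1 else x0) =
  Enc i (msk i) (if beta then x1 else x0).
Proof.
move=> Ei; rewrite /Enc ffunE !(chal_Some _ Ei).
by case: beta; rewrite /= [msk i + _]addrC addrA subrKC.
Qed.

Lemma KeyGen_shift_msk beta (E : enc_log q m n) msk (y : vecs q m n) d0 d1 :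
  f_y y (chal false E) + d0 = f_y y (chal true E) + d1 ->
  KeyGen (shift_msk beta E msk) y (if ~~ beta then d1 else d0) =
  KeyGen msk y (if beta then d1 else d0).
Proof.
move=> balanced; rewrite /KeyGen sum_ip_shift_msk -addrA -opprD; congr (_, _).
by case: beta; [rewrite /= balanced | rewrite /= -balanced]; apply: addrKA.
Qed.

Lemma run_logs_extend beta msk (A : adversary q m n) E K b E' K' :
  run beta msk A E K = (b, E', K') ->
  (forall i p, E i = Some p -> E' i = Some p) /\ exists s, K' = K ++ s.
Proof.
elim: A E K => [b0|i x0 x1 k IH|y d0 d1 k IH] E K /=.
- by case=> _ <- <-; split=> //; exists [::]; rewrite cats0.
- case Ei: (E i) => [p|]; first exact: IH.
  move/IH => [E_E' K_K']; split=> // j p Ej; apply: E_E'.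
  by rewrite ffunE; case: eqP => // eq_ji; rewrite -eq_ji Ej in Ei.
- move/IH => [E_E' [s ->]]; split=> //; exists ((y, d0, d1) :: s).
  by rewrite cat_rcons.
Qed.

Definition balanced_log (E : enc_log q m n) (K : key_log q m n) :=
  forall t, t \in K ->
  f_y t.1.1 (chal false E) + t.1.2 = f_y t.1.1 (chal true E) + t.2.

Lemma admissible_balanced (E : enc_log q m n) K : admissible E K -> balanced_log E K.
Proof.
case/orP => [/eqP -> //|/andP [_ /allP balK]] t tK.
exact/eqP/balK.
Qed.

Lemma run_shift_msk beta msk (A : adversary q m n) E K b E' K' :
  run beta msk A E K = (b, E', K') -> balanced_log E' K' ->
  run (~~ beta) (shift_msk beta E' msk) A E K = (b, E', K').
Proof.
elim: A E K => [b0|i x0 x1 k IH|y d0 d1 k IH] E K //=.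
- case Ei: (E i) => [p|]; first exact: IH.
  move=> run_eq balE'; have [E_E' _] := run_logs_extend run_eq.
  have E'i : E' i = Some (x0, x1) by apply: E_E'; rewrite ffunE eqxx.
  by rewrite Enc_shift_msk //; apply: IH.
- move=> run_eq balE'; have [_ [s K'_eq]] := run_logs_extend run_eq.
  have : (y, d0, d1) \in K' by rewrite K'_eq mem_cat mem_rcons mem_head.
  by move/balE' => /= bal_y; rewrite KeyGen_shift_msk //; apply: IH.
Qed.

Section Counting.
Variables (R : finType) (A : R -> adversary q m n).

Definition transcript beta (p : R * msk_t q m n) :=
  run beta p.2 (A p.1) [ffun => None] [::].

Definition winners beta := [set p : R * msk_t q m n | IND beta (A p.1) p.2].

Definition shift_pair beta (p : R * msk_t q m n) :=
  (p.1, shift_msk beta (transcript beta p).1.2 p.2).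

Lemma transcript_shift_pair beta p : p \in winners beta ->
  transcript (~~ beta) (shift_pair beta p) = transcript beta p.
Proof.
rewrite inE /IND /shift_pair /transcript /=.
case run_eq: (run _ _ _ _ _) => [[b E] K] /andP [_ adm].
exact: run_shift_msk run_eq (admissible_balanced adm).
Qed.

Lemma shift_pair_winner beta p :
  p \in winners beta -> shift_pair beta p \in winners (~~ beta).
Proof.
move=> win; move: (win); rewrite !inE /IND.
by rewrite -/(transcript _ _) -(transcript_shift_pair win).
Qed.

Lemma card_winners_le beta : (#|winners beta| <= #|winners (~~ beta)|)%N.
Proof.
rewrite -(card_in_imset (f := shift_pair beta)).
  by apply/subset_leq_card/subsetP => _ /imsetP [p win ->]; apply: shift_pair_winner.
move=> p1 p2 win1 win2 eq_shifted.
have eq_tr : transcript beta p1 = transcript beta p2.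
  by rewrite -(transcript_shift_pair win1) -(transcript_shift_pair win2) eq_shifted.
move: eq_shifted eq_tr; case: p1 p2 {win1 win2} => [r msk1] [_ msk2] [<-].
by move=> + eq_tr; rewrite /shift_pair /= eq_tr => /shift_msk_inj ->.
Qed.

End Counting.
End OneTimePad.

Theorem theorem1 (q m n : nat) (hq : (1 < q)%N)
  (R : finType) (A : R -> adversary q m n) :
  Adv_IND A = 0.
Proof.
have eq_card : #|winners A false| = #|winners A true|.
  by apply/eqP; rewrite eqn_leq (card_winners_le A false) (card_winners_le A true).
by rewrite /Adv_IND /Pr_IND -!/(winners _ _) eq_card subrr normr0.
Qed.
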